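(* Let $B_*$ be an oriented Borel–Moore homology theory with refined l.c.i. pullbacks and let $f:X\to Y$ be a morphism of proper varieties. For proper $Z$ let $K_Z:\mathrm{op}B^*(Z)\to\mathrm{Hom}_{B^*}(B_*(Z),B^* )$ be the Kronecker duality map $c\mapsto\pi_{Z*}\circ c_{Z\xrightarrow{\mathrm{id}}Z}$. Then for every $c\in\mathrm{op}B^*(Y)$, \[ K_X(f^*c)=K_Y(c)\circ f_*, \] i.e. the operational pullback $f^*:\mathrm{op}B^*(Y)\to\mathrm{op}B^*(X)$ and the map $\mathrm{Hom}_{B^*}(B_*(Y),B^* )\to\mathrm{Hom}_{B^*}(B_*(X),B^* )$ induced by $f_*:B_*(X)\to B_*(Y)$ commute with the Kronecker maps.
   Context: $k$ has characteristic zero; $B_*$ is an oriented Borel–Moore homology theory (Levine–Morel) with refined l.c.i. pullbacks; $B^*=B_*(\mathrm{Spec}\,k)$; $\pi_Z:Z\to\mathrm{Spec}\,k$ is the structure morphism. An operational class $c\in\mathrm{op}B^*(Y)$ is a collection of maps $c_{W\to Y}:B_*(W)\to B_*(W)$ for all morphisms $W\to Y$, commuting with proper pushforwards, smooth pullbacks and refined l.c.i. pullbacks over $Y$, and compatible with external products ($c(\alpha\times\beta)=c(\alpha)\times\beta$ for projections $W\times V\to W$). The operational pullback is defined by $(f^*c)_{W\to X}=c_{W\to X\xrightarrow{f}Y}$. *)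

(* Only the axioms relevant to the
   definitions used below are recorded. *)

Set Implicit Arguments.
Unset Strict Implicit.

Record BMTheory := {
  Var : Type;
  Hom : Var -> Var -> Type;
  comp : forall X Y Z : Var, Hom Y Z -> Hom X Y -> Hom X Z;   (* comp g f = g o f *)
  idm : forall X : Var, Hom X X;
  comp_assoc : forall X Y Z T (h : Hom Z T) (g : Hom Y Z) (f : Hom X Y),
      comp h (comp g f) = comp (comp h g) f;
  comp_id_l : forall X Y (f : Hom X Y), comp (idm Y) f = f;
  comp_id_r : forall X Y (f : Hom X Y), comp f (idm X) = f;
  pt : Var;
  pi : forall X : Var, Hom X pt;
  pi_unique : forall X (g : Hom X pt), g = pi X;
  proper : forall X Y : Var, Hom X Y -> Prop;
  smooth : forall X Y : Var, Hom X Y -> Prop;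
  lci    : forall X Y : Var, Hom X Y -> Prop;
  proper_id : forall X, proper (idm X);
  proper_comp : forall X Y Z (g : Hom Y Z) (f : Hom X Y),
      proper f -> proper g -> proper (comp g f);
  (* varieties are separated: if g o f is proper then f is proper *)
  proper_cancel : forall X Y Z (g : Hom Y Z) (f : Hom X Y),
      proper (comp g f) -> proper f;
  prodV : Var -> Var -> Var;
  pr1 : forall W V : Var, Hom (prodV W V) W;
  fib : forall X Y W : Var, Hom X Y -> Hom W Y -> Var;
  fib_pr : forall X Y W (h : Hom X Y) (u : Hom W Y), Hom (fib h u) W;
  B : Var -> Type;
  push : forall X Y : Var, Hom X Y -> B X -> B Y;    (* meaningful for proper maps *)
  push_id : forall X (a : B X), push (idm X) a = a;
  push_comp : forall X Y Z (g : Hom Y Z) (f : Hom X Y), proper f -> proper g ->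
      forall a, push (comp g f) a = push g (push f a);
  pull : forall X Y : Var, Hom X Y -> B Y -> B X;    (* meaningful for smooth maps *)
  lci_pull : forall X Y W (h : Hom X Y) (u : Hom W Y), B W -> B (fib h u);
  ext : forall W V : Var, B W -> B V -> B (prodV W V)
}.

Arguments Hom : clear implicits.
Arguments Var : clear implicits.
Arguments comp {b X Y Z}.
Arguments idm {b}.
Arguments pt {b}.
Arguments pi {b}.
Arguments proper {b X Y}.
Arguments smooth {b X Y}.
Arguments lci {b X Y}.
Arguments prodV {b}.
Arguments pr1 {b W V}.
Arguments fib {b X Y W}.
Arguments fib_pr {b X Y W}.
Arguments B {b}.
Arguments push {b X Y}.
Arguments pull {b X Y}.
Arguments lci_pull {b X Y W}.
Arguments ext {b W V}.

Section Op.
Variable T : BMTheory.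

Definition opFamily (Y : Var T) := forall W : Var T, Hom T W Y -> B W -> B W.

Definition is_opclass (Y : Var T) (c : opFamily Y) : Prop :=
  (forall W W' (g : Hom T W Y) (p : Hom T W' W), proper p ->
     forall a, push p (c W' (comp g p) a) = c W g (push p a)) /\
  (forall W W' (g : Hom T W Y) (s : Hom T W' W), smooth s ->
     forall a, pull s (c W g a) = c W' (comp g s) (pull s a)) /\
  (forall X0 Y0 W (h : Hom T X0 Y0) (u : Hom T W Y0) (g : Hom T W Y), lci h ->
     forall a, c (fib h u) (comp g (fib_pr h u)) (lci_pull h u a)
               = lci_pull h u (c W g a)) /\
  (forall W V (g : Hom T W Y) (a : B W) (b : B V),
     c (prodV W V) (comp g pr1) (ext a b) = ext (c W g a) b).

Definition opB (Y : Var T) := { c : opFamily Y | is_opclass c }.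

Definition opPullback (X Y : Var T) (f : Hom T X Y) (c : opFamily Y) : opFamily X :=
  fun W g => c W (comp f g).

(* Kronecker duality map K_Z(c) = pi_{Z*} o c_{Z -id-> Z} : B_*(Z) -> B^* = B_*(Spec k) *)
Definition Kronecker (Z : Var T) (c : opFamily Z) : B Z -> B (@pt T) :=
  fun a => push (pi Z) (c Z (idm Z) a).

End Op.

Arguments opPullback {T X Y}.
Arguments Kronecker {T Z}.

(** Kronecker duality is natural because an operational class commutes with
    proper pushforward: for proper [f : X -> Y], pushing [c_{X -> Y}(a)] along
    [f] gives [c_{id_Y}(f_* a)], and [pi_X = pi_Y o f] by terminality of
    [Spec k]; properness of [f] comes from separatedness, since [pi_Y o f] is
    proper. *)

From Stdlib Require Import FunctionalExtensionality.

Set Implicit Arguments.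
Unset Strict Implicit.

Section Naturality.
Variable T : BMTheory.

Lemma pi_comp (X Y : Var T) (f : Hom T X Y) : comp (pi Y) f = pi X.
Proof. apply pi_unique. Qed.

Lemma proper_of_proper_pi (X Y : Var T) (f : Hom T X Y) :
  proper (pi X) -> proper f.
Proof.
  intro HX. apply (proper_cancel (g := pi Y)). rewrite pi_comp. exact HX.
Qed.

Definition commutes_with_push {Y : Var T} (c : opFamily Y) : Prop :=
  forall W W' (g : Hom T W Y) (p : Hom T W' W), proper p ->
    forall a, push p (c W' (comp g p) a) = c W g (push p a).

Lemma opclass_commutes_with_push (Y : Var T) (c : opB Y) :
  commutes_with_push (proj1_sig c).
Proof. exact (proj1 (proj2_sig c)). Qed.

Lemma push_opPullback_id (X Y : Var T) (f : Hom T X Y) (c : opFamily Y) :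
  proper f -> commutes_with_push c ->
  forall a, push f (opPullback f c X (idm X) a) = c Y (idm Y) (push f a).
Proof.
  intros Hf Hc a. unfold opPullback.
  rewrite <- (Hc Y X (idm Y) f Hf a), comp_id_l, comp_id_r.
  reflexivity.
Qed.

Lemma Kronecker_opPullback (X Y : Var T) (f : Hom T X Y) (c : opFamily Y) :
  proper (pi X) -> proper (pi Y) -> commutes_with_push c ->
  forall a, Kronecker (opPullback f c) a = Kronecker c (push f a).
Proof.
  intros HX HY Hc a. unfold Kronecker.
  assert (Hf : proper f) by exact (proper_of_proper_pi f HX).
  rewrite <- (push_opPullback_id Hf Hc), <- push_comp by assumption.
  rewrite pi_comp. reflexivity.
Qed.

End Naturality.

Theorem mainTheorem19 (T : BMTheory) (X Y : Var T) (f : Hom T X Y)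
    (HX : proper (pi X)) (HY : proper (pi Y)) (c : opB Y) :
  Kronecker (opPullback f (proj1_sig c))
  = (fun a : B X => Kronecker (proj1_sig c) (push f a)).
Proof.
  apply functional_extensionality.
  exact (Kronecker_opPullback f HX HY (opclass_commutes_with_push c)).
Qed.
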